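(* For every Minkowski space $X$ of dimension at least $3$, $m(X)\geq 4$.
   Context: A Minkowski space is a finite-dimensional real normed space $(X,\|\cdot\|)$. For a set $S\subseteq X$, its midpoint set is $M(S)=\{\tfrac12(x+y): x,y\in S,\ x\neq y\}$. A set $S\subseteq X$ is an M-set if every vector in $M(S)$ has norm exactly $1$ and every vector in $S$ has norm strictly greater than $1$. $m(X)$ denotes the largest cardinality of an M-set in $X$ if such a largest finite cardinality exists, and $m(X)=\infty$ otherwise. *)

From Stdlib Require Import Reals List.
From Stdlib Require Fin.
Open Scope R_scope.

(* Every n-dimensional real normed space is linearly isometric to R^n equipped
   with some norm; we model R^n as functions Fin.t n -> R. *)
Definition Vec (n : nat) : Type := Fin.t n -> R.

Definition vzero {n : nat} : Vec n := fun _ => 0.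
Definition vadd {n : nat} (x y : Vec n) : Vec n := fun i => x i + y i.
Definition vscale {n : nat} (a : R) (x : Vec n) : Vec n := fun i => a * x i.

Definition is_norm {n : nat} (N : Vec n -> R) : Prop :=
  (forall x, N x = 0 -> x = vzero) /\
  (forall (a : R) x, N (vscale a x) = Rabs a * N x) /\
  (forall x y, N (vadd x y) <= N x + N y).

Definition midpoint {n : nat} (x y : Vec n) : Vec n := vscale (/2) (vadd x y).

Definition is_Mset {n : nat} (N : Vec n -> R) (S : Vec n -> Prop) : Prop :=
  (forall x y, S x -> S y -> x <> y -> N (midpoint x y) = 1) /\
  (forall x, S x -> 1 < N x).

Definition m_ge {n : nat} (N : Vec n -> R) (k : nat) : Prop :=
  exists S : Vec n -> Prop, is_Mset N S /\
    exists l : list (Vec n), NoDup l /\ length l = k /\ (forall x, In x l -> S x).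

(* Restricted to the span of the first three coordinates, [N] is a norm [M] on
   R^3.  In the plane [z = 0], rotating a unit vector [q] away from a unit vector
   [e] and applying the intermediate value theorem gives [M (e + q) = M (e - q)],
   from which one gets independent [u], [v] with [M u, M v > 1] and [(u + v)/2],
   [(u - v)/2] on the unit sphere.  In coordinates where [u = e1] and [v = e2],
   Hahn-Banach gives linear forms [f, g <= M] with [f e1 = M e1] and
   [g e2 = M e2]; for a unit vector [a] in [ker f] and [ker g], the points
   [a + e1], [a - e1], [-a + e2], [-a - e2] form an M-set: their midpoints are
   [+-a] and [+-(e1 +- e2)/2], and e.g. [M (a + e1) >= f (a + e1) = M e1 > 1]. *)

From Stdlib Require Import Reals List Lra Psatz FunctionalExtensionality FinFun.
From Stdlib Require Fin.
Open Scope R_scope.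

Definition seminorm3 (K : R -> R -> R -> R) : Prop :=
  (forall k x y z, K (k*x) (k*y) (k*z) = Rabs k * K x y z) /\
  (forall x y z x' y' z', K (x+x') (y+y') (z+z') <= K x y z + K x' y' z').

Definition definite3 (K : R -> R -> R -> R) : Prop :=
  forall x y z, K x y z = 0 -> x = 0 /\ y = 0 /\ z = 0.

Lemma continuity_pt_dominated (h g : R -> R) t0 :
  continuity_pt g t0 -> g t0 = 0 -> (forall t, Rabs (h t - h t0) <= g t) ->
  continuity_pt h t0.
Proof.
  intros Hg Hg0 Hle eps Heps.
  destruct (Hg eps Heps) as [d [Hd Hclose]].
  exists d; split; [exact Hd|]. intros t Ht.
  specialize (Hclose t Ht). simpl in *. unfold R_dist in *.
  rewrite Hg0, Rminus_0_r in Hclose.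
  eapply Rle_lt_trans; [apply Hle|]. eapply Rle_lt_trans; [apply Rle_abs|exact Hclose].
Qed.

Section Seminorm3.

Variable K : R -> R -> R -> R.
Hypothesis HK : seminorm3 K.

Lemma seminorm3_scale k x y z : K (k*x) (k*y) (k*z) = Rabs k * K x y z.
Proof. exact (proj1 HK k x y z). Qed.

Lemma seminorm3_add x y z x' y' z' : K (x+x') (y+y') (z+z') <= K x y z + K x' y' z'.
Proof. exact (proj2 HK x y z x' y' z'). Qed.

Lemma seminorm3_scale_nonneg k x y z : 0 <= k -> K (k*x) (k*y) (k*z) = k * K x y z.
Proof. intro Hk. rewrite seminorm3_scale, Rabs_pos_eq; auto. Qed.

Lemma seminorm3_zero : K 0 0 0 = 0.
Proof.
  replace (K 0 0 0) with (K (0*0) (0*0) (0*0)) by (f_equal; ring).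
  rewrite seminorm3_scale_nonneg; lra.
Qed.

Lemma seminorm3_opp x y z : K (-x) (-y) (-z) = K x y z.
Proof.
  replace (K (-x) (-y) (-z)) with (K ((-1)*x) ((-1)*y) ((-1)*z)) by (f_equal; ring).
  rewrite seminorm3_scale, Rabs_left; lra.
Qed.

Lemma seminorm3_nonneg x y z : 0 <= K x y z.
Proof.
  pose proof (seminorm3_add x y z (-x) (-y) (-z)) as H.
  rewrite seminorm3_opp in H.
  replace (K (x + -x) (y + -y) (z + -z)) with (K 0 0 0) in H by (f_equal; ring).
  rewrite seminorm3_zero in H. lra.
Qed.

Lemma seminorm3_le_coords x y z :
  K x y z <= Rabs x * K 1 0 0 + Rabs y * K 0 1 0 + Rabs z * K 0 0 1.
Proof.
  pose proof (seminorm3_add x 0 0 0 y z) as H1.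
  pose proof (seminorm3_add 0 y 0 0 0 z) as H2.
  replace (K (x+0) (0+y) (0+z)) with (K x y z) in H1 by (f_equal; ring).
  replace (K (0+0) (y+0) (0+z)) with (K 0 y z) in H2 by (f_equal; ring).
  replace (K x 0 0) with (K (x*1) (x*0) (x*0)) in H1 by (f_equal; ring).
  replace (K 0 y 0) with (K (y*0) (y*1) (y*0)) in H2 by (f_equal; ring).
  replace (K 0 0 z) with (K (z*0) (z*0) (z*1)) in H2 by (f_equal; ring).
  rewrite seminorm3_scale in H1. rewrite !seminorm3_scale in H2. lra.
Qed.

Lemma seminorm3_dist x y z x' y' z' :
  Rabs (K x y z - K x' y' z') <=
  Rabs (x-x') * K 1 0 0 + Rabs (y-y') * K 0 1 0 + Rabs (z-z') * K 0 0 1.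
Proof.
  pose proof (seminorm3_add x' y' z' (x-x') (y-y') (z-z')) as H1.
  pose proof (seminorm3_add x y z (x'-x) (y'-y) (z'-z)) as H2.
  replace (K (x' + (x-x')) (y' + (y-y')) (z' + (z-z'))) with (K x y z) in H1
    by (f_equal; ring).
  replace (K (x + (x'-x)) (y + (y'-y)) (z + (z'-z))) with (K x' y' z') in H2
    by (f_equal; ring).
  pose proof (seminorm3_le_coords (x-x') (y-y') (z-z')).
  pose proof (seminorm3_le_coords (x'-x) (y'-y) (z'-z)).
  rewrite (Rabs_minus_sym x' x), (Rabs_minus_sym y' y), (Rabs_minus_sym z' z) in *.
  apply Rabs_le; lra.
Qed.

Lemma seminorm3_continuous (g1 g2 g3 : R -> R) :
  continuity g1 -> continuity g2 -> continuity g3 ->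
  continuity (fun t => K (g1 t) (g2 t) (g3 t)).
Proof.
  intros C1 C2 C3 t0.
  apply continuity_pt_dominated with (fun t =>
    Rabs (g1 t - g1 t0) * K 1 0 0 + Rabs (g2 t - g2 t0) * K 0 1 0
    + Rabs (g3 t - g3 t0) * K 0 0 1).
  - reg.
  - rewrite !Rminus_diag, Rabs_R0. ring.
  - intro t. apply seminorm3_dist.
Qed.

(* One step of the Hahn-Banach extension, from the plane [z = 0] to space. *)
Lemma seminorm3_extend_form a b :
  (forall x y, a*x + b*y <= K x y 0) ->
  exists c, forall x y z, a*x + b*y + c*z <= K x y z.
Proof.
  intro Hab.
  assert (Hsep : forall x y x' y', a*x + b*y - K x y (-1) <= K x' y' 1 - (a*x' + b*y')).
  { intros x y x' y'. pose proof (Hab (x+x') (y+y')) as H.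
    pose proof (seminorm3_add x y (-1) x' y' 1).
    replace (K (x+x') (y+y') 0) with (K (x+x') (y+y') (-1+1)) in H by (f_equal; ring).
    lra. }
  set (E := fun v => exists x y, v = a*x + b*y - K x y (-1)).
  destruct (completeness E) as [c [Hub Hlub]].
  { exists (K 0 0 1 - (a*0 + b*0)). intros v [x [y ->]]. apply Hsep. }
  { exists (a*0 + b*0 - K 0 0 (-1)), 0, 0. reflexivity. }
  assert (Hlow : forall x y, a*x + b*y - K x y (-1) <= c)
    by (intros x y; apply Hub; exists x, y; reflexivity).
  assert (Hhigh : forall x y, c <= K x y 1 - (a*x + b*y))
    by (intros x y; apply Hlub; intros v [x' [y' ->]]; apply Hsep).
  exists c. intros x y z.
  destruct (Rtotal_order z 0) as [Hz|[->|Hz]].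
  - pose proof (Hlow (x/(-z)) (y/(-z))).
    replace (K x y z) with (K ((-z)*(x/(-z))) ((-z)*(y/(-z))) ((-z)*(-1)))
      by (f_equal; field; lra).
    rewrite seminorm3_scale_nonneg by lra.
    replace (a*x + b*y + c*z) with ((-z) * (a*(x/(-z)) + b*(y/(-z)) - c)) by (field; lra).
    apply Rmult_le_compat_l; lra.
  - rewrite Rmult_0_r, Rplus_0_r. apply Hab.
  - pose proof (Hhigh (x/z) (y/z)).
    replace (K x y z) with (K (z*(x/z)) (z*(y/z)) (z*1)) by (f_equal; field; lra).
    rewrite seminorm3_scale_nonneg by lra.
    replace (a*x + b*y + c*z) with (z * (a*(x/z) + b*(y/z) + c)) by (field; lra).
    apply Rmult_le_compat_l; lra.
Qed.

End Seminorm3.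

Lemma seminorm3_supporting_form K : seminorm3 K ->
  exists c1 c2, forall x y z, K 1 0 0 * x + c1*y + c2*z <= K x y z.
Proof.
  intro HK.
  assert (HK' : seminorm3 (fun x _ y => K x y 0)).
  { split; intros; cbv beta.
    - replace (K (k*x) (k*z) 0) with (K (k*x) (k*z) (k*0)) by (f_equal; ring).
      apply seminorm3_scale; exact HK.
    - replace (K (x+x') (z+z') 0) with (K (x+x') (z+z') (0+0)) by (f_equal; ring).
      apply seminorm3_add; exact HK. }
  destruct (seminorm3_extend_form _ HK' (K 1 0 0) 0) as [c1 Hc1].
  { intros x w. cbv beta. rewrite Rmult_0_l, Rplus_0_r.
    replace (K x 0 0) with (K (x*1) (x*0) (x*0)) by (f_equal; ring).
    rewrite seminorm3_scale by exact HK.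
    pose proof (seminorm3_nonneg K HK 1 0 0). pose proof (Rle_abs x). nra. }
  destruct (seminorm3_extend_form K HK (K 1 0 0) c1) as [c2 Hc2].
  { intros x y. pose proof (Hc1 x 0 y). lra. }
  exists c1, c2. exact Hc2.
Qed.

Lemma orthogonal_nonzero3 p1 p2 p3 :
  exists x y z, ~ (x = 0 /\ y = 0 /\ z = 0) /\ p1*x + p2*y + p3*z = 0.
Proof.
  destruct (Req_dec p1 0) as [->|H1].
  - destruct (Req_dec p2 0) as [->|H2].
    + exists 1, 0, 0. split; [lra|ring].
    + exists 0, p3, (-p2). split; [intros (_ & _ & ?); lra|ring].
  - exists p2, (-p1), 0. split; [intros (_ & ? & _); lra|ring].
Qed.

Lemma common_root3 p1 p2 p3 q1 q2 q3 :
  exists x y z, ~ (x = 0 /\ y = 0 /\ z = 0) /\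
    p1*x + p2*y + p3*z = 0 /\ q1*x + q2*y + q3*z = 0.
Proof.
  set (C1 := p2*q3 - p3*q2). set (C2 := p3*q1 - p1*q3). set (C3 := p1*q2 - p2*q1).
  destruct (Req_dec (C1*C1 + C2*C2 + C3*C3) 0) as [HC|HC].
  2: { exists C1, C2, C3. split; [intros (-> & -> & ->); apply HC; ring|].
       unfold C1, C2, C3; split; ring. }
  destruct (Req_dec (p1*p1 + p2*p2 + p3*p3) 0) as [Hp|Hp].
  - destruct (orthogonal_nonzero3 q1 q2 q3) as (x & y & z & Hnz & Hq).
    exists x, y, z. repeat split; [exact Hnz| |exact Hq].
    replace p1 with 0 by nra. replace p2 with 0 by nra. replace p3 with 0 by nra. ring.
  - destruct (orthogonal_nonzero3 p1 p2 p3) as (x & y & z & Hnz & Hpw).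
    exists x, y, z. repeat split; [exact Hnz|exact Hpw|].
    assert (C1 = 0 /\ C2 = 0 /\ C3 = 0) as (H1 & H2 & H3) by (repeat split; nra).
    apply (Rmult_eq_reg_l (p1*p1 + p2*p2 + p3*p3)); [|exact Hp].
    (* Lagrange's identity for (p x q).(p x w), with w = (x, y, z). *)
    transitivity (C1*(p2*z - p3*y) + C2*(p3*x - p1*z) + C3*(p1*y - p2*x)
                  + (p1*x + p2*y + p3*z) * (p1*q1 + p2*q2 + p3*q3)).
    + unfold C1, C2, C3. ring.
    + rewrite H1, H2, H3, Hpw. ring.
Qed.

Lemma unit_common_root3 K p1 p2 p3 q1 q2 q3 : seminorm3 K -> definite3 K ->
  exists a1 a2 a3, K a1 a2 a3 = 1 /\
    p1*a1 + p2*a2 + p3*a3 = 0 /\ q1*a1 + q2*a2 + q3*a3 = 0.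
Proof.
  intros HK Hdef.
  destruct (common_root3 p1 p2 p3 q1 q2 q3) as (x & y & z & Hnz & Hp & Hq).
  set (k := K x y z).
  assert (Hk : 0 < k).
  { destruct (seminorm3_nonneg K HK x y z) as [H|H]; [exact H|].
    exfalso. apply Hnz, Hdef. symmetry. exact H. }
  exists (/k*x), (/k*y), (/k*z). repeat split.
  - rewrite seminorm3_scale_nonneg by (auto; left; apply Rinv_0_lt_compat, Hk).
    fold k. field. lra.
  - transitivity (/k * (p1*x + p2*y + p3*z)); [ring|rewrite Hp; ring].
  - transitivity (/k * (q1*x + q2*y + q3*z)); [ring|rewrite Hq; ring].
Qed.

Record pt := Pt { px : R; py : R; pz : R }.

Definition pmid (P Q : pt) : pt :=
  Pt ((px P + px Q)/2) ((py P + py Q)/2) ((pz P + pz Q)/2).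

Definition uncurry3 (K : R -> R -> R -> R) (P : pt) : R := K (px P) (py P) (pz P).

Lemma pmid_diag P : pmid P P = P.
Proof. destruct P as [x y z]. unfold pmid; simpl. f_equal; field. Qed.

Lemma pmid_comm P Q : pmid P Q = pmid Q P.
Proof. unfold pmid. f_equal; field. Qed.

Definition Mset_list {V : Type} (mid : V -> V -> V) (G : V -> R) (l : list V) : Prop :=
  NoDup l /\ (forall P, In P l -> 1 < G P) /\
  (forall P Q, In P l -> In Q l -> P <> Q -> G (mid P Q) = 1).

(* Distinctness comes for free: the midpoint of a point with itself has [G > 1]. *)
Lemma Mset_list4 {V : Type} (mid : V -> V -> V) (G : V -> R) (P1 P2 P3 P4 : V) :
  (forall P, mid P P = P) -> (forall P Q, mid P Q = mid Q P) ->
  1 < G P1 -> 1 < G P2 -> 1 < G P3 -> 1 < G P4 ->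
  G (mid P1 P2) = 1 -> G (mid P1 P3) = 1 -> G (mid P1 P4) = 1 ->
  G (mid P2 P3) = 1 -> G (mid P2 P4) = 1 -> G (mid P3 P4) = 1 ->
  Mset_list mid G (P1 :: P2 :: P3 :: P4 :: nil).
Proof.
  intros Hdiag Hcomm G1 G2 G3 G4 M12 M13 M14 M23 M24 M34.
  split; [|split].
  - repeat constructor; simpl; intros H; repeat destruct H as [H|H];
      try contradiction; subst; rewrite Hdiag in *; lra.
  - intros P HP. simpl in HP. repeat destruct HP as [<-|HP]; tauto.
  - intros P Q HP HQ HPQ. simpl in HP, HQ.
    repeat destruct HP as [<-|HP]; repeat destruct HQ as [<-|HQ]; try tauto;
      rewrite ?(Hcomm P2 P1), ?(Hcomm P3 P1), ?(Hcomm P4 P1),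
              ?(Hcomm P3 P2), ?(Hcomm P4 P2), ?(Hcomm P4 P3); assumption.
Qed.

Lemma Mset_list_map {U V : Type} (midU : U -> U -> U) (midV : V -> V -> V)
    (f : U -> V) (G : V -> R) (l : list U) :
  Injective f -> (forall P Q, f (midU P Q) = midV (f P) (f Q)) ->
  Mset_list midU (fun P => G (f P)) l -> Mset_list midV G (map f l).
Proof.
  intros Hinj Hmid (Hnd & Hpts & Hmids). split; [|split].
  - apply Injective_map_NoDup; assumption.
  - intros v Hv. apply in_map_iff in Hv as (P & <- & HP). auto.
  - intros v w Hv Hw Hvw.
    apply in_map_iff in Hv as (P & <- & HP). apply in_map_iff in Hw as (Q & <- & HQ).
    rewrite <- Hmid. apply Hmids; auto. intros ->. auto.
Qed.

Lemma m_ge_of_Mset_list {n : nat} (N : Vec n -> R) (l : list (Vec n)) k :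
  length l = k -> Mset_list midpoint N l -> m_ge N k.
Proof.
  intros Hk (Hnd & Hpts & Hmids).
  exists (fun v => In v l). split; [split; auto|]. exists l. auto.
Qed.

Lemma Mset_of_unit_half_diagonals K : seminorm3 K -> definite3 K ->
  1 < K 1 0 0 -> 1 < K 0 1 0 -> K (/2) (/2) 0 = 1 -> K (/2) (-/2) 0 = 1 ->
  exists l, length l = 4%nat /\ Mset_list pmid (uncurry3 K) l.
Proof.
  intros HK Hdef Hu Hv Hb Hc.
  destruct (seminorm3_supporting_form K HK) as (c1 & c2 & Fu).
  destruct (seminorm3_supporting_form (fun x y z => K y x z)) as (d1 & d2 & Fv).
  { split; intros; [apply seminorm3_scale|apply seminorm3_add]; exact HK. }
  cbv beta in Fv.
  destruct (unit_common_root3 K (K 1 0 0) c1 c2 d1 (K 0 1 0) d2 HK Hdef)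
    as (a1 & a2 & a3 & Ha & Au & Av).
  exists (Pt (a1+1) a2 a3 :: Pt (a1-1) a2 a3 :: Pt (-a1) (1-a2) (-a3)
          :: Pt (-a1) (-a2-1) (-a3) :: nil).
  split; [reflexivity|].
  apply Mset_list4; [exact pmid_diag|exact pmid_comm|..];
    unfold uncurry3, pmid; simpl.
  - pose proof (Fu (a1+1) a2 a3). lra.
  - rewrite <- (seminorm3_opp K HK). pose proof (Fu (-(a1-1)) (-a2) (-a3)). lra.
  - pose proof (Fv (1-a2) (-a1) (-a3)). lra.
  - rewrite <- (seminorm3_opp K HK). pose proof (Fv (-(-a2-1)) (- -a1) (- -a3)). lra.
  - transitivity (K a1 a2 a3); [f_equal; field|exact Ha].
  - transitivity (K (/2) (/2) 0); [f_equal; field|exact Hb].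
  - transitivity (K (/2) (-/2) 0); [f_equal; field|exact Hc].
  - transitivity (K (-/2) (- -/2) (-0)); [f_equal; field|].
    rewrite seminorm3_opp by exact HK. exact Hc.
  - transitivity (K (-/2) (-/2) (-0)); [f_equal; field|].
    rewrite seminorm3_opp by exact HK. exact Hb.
  - transitivity (K (-a1) (-a2) (-a3)); [f_equal; field|].
    rewrite seminorm3_opp by exact HK. exact Ha.
Qed.

Definition unit_half_diagonals (M : R -> R -> R -> R) : Prop :=
  exists u1 u2 v1 v2, 1 < M u1 u2 0 /\ 1 < M v1 v2 0 /\
    M ((u1+v1)/2) ((u2+v2)/2) 0 = 1 /\ M ((u1-v1)/2) ((u2-v2)/2) 0 = 1 /\
    u1*v2 - u2*v1 <> 0.

Lemma unit_half_diagonals_of_balanced M r qx qy : seminorm3 M ->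
  0 < r -> qy <> 0 -> M r 0 0 = 1 -> M qx qy 0 = 1 ->
  M (r+qx) qy 0 = M (r-qx) (-qy) 0 -> unit_half_diagonals M.
Proof.
  intros HM Hr Hqy Hr1 Hq Hbal.
  assert (Hrq : r * qy <> 0) by (apply Rmult_integral_contrapositive_currified; lra).
  assert (H2r : M (2*r) (2*0) (2*0) = 2) by (rewrite seminorm3_scale_nonneg, Hr1 by (auto; lra); ring).
  destruct (Rle_lt_dec (M (r+qx) qy 0) 1) as [Hle|Hgt].
  - (* [r + q] and [r - q] are then unit vectors too, since [M (2 r) = 2]. *)
    pose proof (seminorm3_add M HM (r+qx) qy 0 (r-qx) (-qy) 0) as Hsum.
    replace (M (r+qx + (r-qx)) (qy + -qy) (0+0)) with (M (2*r) (2*0) (2*0)) in Hsum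
      by (f_equal; ring).
    exists (2*r), 0, (2*qx), (2*qy). repeat split.
    + replace (M (2*r) 0 0) with (M (2*r) (2*0) (2*0)) by (f_equal; ring). lra.
    + replace (M (2*qx) (2*qy) 0) with (M (2*qx) (2*qy) (2*0)) by (f_equal; ring).
      rewrite seminorm3_scale_nonneg, Hq by (auto; lra). lra.
    + transitivity (M (r+qx) qy 0); [f_equal; field|lra].
    + transitivity (M (r-qx) (-qy) 0); [f_equal; field|lra].
    + nra.
  - exists (r+qx), qy, (r-qx), (-qy). repeat split.
    + exact Hgt.
    + lra.
    + transitivity (M r 0 0); [f_equal; field|exact Hr1].
    + transitivity (M qx qy 0); [f_equal; field|exact Hq].
    + nra.
Qed.

(* [sweep_norm M r s t] is the norm of [w t = ((1-t) r, s t)], and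
   [sweep_gap M r s t] is [M (e + q) - M (e - q)] for [e = (r, 0)] and
   [q = w t / sweep_norm M r s t], multiplied by [sweep_norm M r s t]
   to stay continuous without any division. *)
Definition sweep_norm (M : R -> R -> R -> R) r s t : R := M ((1-t)*r) (s*t) 0.

Definition sweep_gap (M : R -> R -> R -> R) r s t : R :=
  M (sweep_norm M r s t * r + (1-t)*r) (s*t) 0
  - M (sweep_norm M r s t * r - (1-t)*r) (-(s*t)) 0.

Lemma sweep_gap_continuous M r s : seminorm3 M -> continuity (sweep_gap M r s).
Proof.
  intro HM.
  assert (Hn : continuity (sweep_norm M r s))
    by (apply (seminorm3_continuous M HM); reg).
  unfold sweep_gap.
  apply (continuity_minus (fun t => M (sweep_norm M r s t * r + (1-t)*r) (s*t) 0)
                          (fun t => M (sweep_norm M r s t * r - (1-t)*r) (-(s*t)) 0));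
    apply (seminorm3_continuous M HM); reg.
Qed.

Lemma unit_half_diagonals_of_sweep M r s : seminorm3 M -> definite3 M ->
  0 < r -> M r 0 0 = 1 -> s <> 0 -> sweep_gap M r s 1 <= 0 -> unit_half_diagonals M.
Proof.
  intros HM Hdef Hr Hr1 Hs Hgap1.
  assert (Hgap0 : sweep_gap M r s 0 = 2).
  { unfold sweep_gap, sweep_norm.
    replace (M ((1-0)*r) (s*0) 0) with (M r 0 0) by (f_equal; ring). rewrite Hr1.
    replace (M (1*r + (1-0)*r) (s*0) 0) with (M (2*r) (2*0) (2*0)) by (f_equal; ring).
    replace (M (1*r - (1-0)*r) (-(s*0)) 0) with (M 0 0 0) by (f_equal; ring).
    rewrite seminorm3_zero, seminorm3_scale_nonneg, Hr1 by (auto; lra). ring. }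
  destruct (IVT_cor (sweep_gap M r s) 0 1 (sweep_gap_continuous M r s HM))
    as [t [[Ht0 Ht1] Ht]]; [lra|rewrite Hgap0; lra|].
  assert (Htpos : 0 < t) by (destruct Ht0 as [H|<-]; [exact H|lra]).
  set (m := sweep_norm M r s t).
  assert (Hm : 0 < m).
  { destruct (seminorm3_nonneg M HM ((1-t)*r) (s*t) 0) as [H|H]; [exact H|].
    symmetry in H. apply Hdef in H as (_ & H & _).
    apply Rmult_integral in H. lra. }
  assert (Hscale : forall x y, M (x/m) (y/m) 0 = M x y 0 / m).
  { intros x y.
    replace (M (x/m) (y/m) 0) with (M (/m*x) (/m*y) (/m*0)) by (f_equal; field; lra).
    rewrite seminorm3_scale_nonneg by (auto; left; apply Rinv_0_lt_compat, Hm).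
    unfold Rdiv. ring. }
  apply (unit_half_diagonals_of_balanced M r ((1-t)*r/m) (s*t/m) HM Hr).
  - unfold Rdiv. repeat apply Rmult_integral_contrapositive_currified;
      try lra; apply Rinv_neq_0_compat; lra.
  - exact Hr1.
  - rewrite Hscale. fold (sweep_norm M r s t) m. field. lra.
  - unfold sweep_gap in Ht. fold m in Ht.
    replace (r + (1-t)*r/m) with ((m*r + (1-t)*r)/m) by (field; lra).
    replace (r - (1-t)*r/m) with ((m*r - (1-t)*r)/m) by (field; lra).
    replace (-(s*t/m)) with (-(s*t)/m) by (field; lra).
    rewrite !Hscale. unfold Rdiv. f_equal. lra.
Qed.

Lemma unit_half_diagonals_of_norm3 M : seminorm3 M -> definite3 M -> unit_half_diagonals M.
Proof.
  intros HM Hdef.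
  assert (H1 : 0 < M 1 0 0).
  { destruct (seminorm3_nonneg M HM 1 0 0) as [H|H]; [exact H|].
    symmetry in H. apply Hdef in H. lra. }
  set (r := / M 1 0 0).
  assert (Hr : 0 < r) by (apply Rinv_0_lt_compat, H1).
  assert (Hr1 : M r 0 0 = 1).
  { replace (M r 0 0) with (M (r*1) (r*0) (r*0)) by (f_equal; ring).
    rewrite seminorm3_scale_nonneg by (auto; lra). unfold r. field. lra. }
  assert (Hopp : sweep_gap M r (-1) 1 = - sweep_gap M r 1 1).
  { unfold sweep_gap, sweep_norm.
    replace (M ((1-1)*r) (-1*1) 0) with (M ((1-1)*r) (1*1) 0)
      by (rewrite <- (seminorm3_opp M HM ((1-1)*r)); f_equal; ring).
    set (m1 := M ((1-1)*r) (1*1) 0).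
    replace (M (m1*r + (1-1)*r) (-1*1) 0) with (M (m1*r - (1-1)*r) (-(1*1)) 0)
      by (f_equal; ring).
    replace (M (m1*r - (1-1)*r) (-(-1*1)) 0) with (M (m1*r + (1-1)*r) (1*1) 0)
      by (f_equal; ring).
    ring. }
  destruct (Rle_dec (sweep_gap M r 1 1) 0).
  - apply (unit_half_diagonals_of_sweep M r 1); auto; lra.
  - apply (unit_half_diagonals_of_sweep M r (-1)); auto; lra.
Qed.

Definition lin2 (u1 u2 v1 v2 : R) (P : pt) : pt :=
  Pt (px P * u1 + py P * v1) (px P * u2 + py P * v2) (pz P).

Section Lin2.

Variables u1 u2 v1 v2 : R.
Hypothesis Hdet : u1*v2 - u2*v1 <> 0.

Lemma lin2_kernel x y : x*u1 + y*v1 = 0 -> x*u2 + y*v2 = 0 -> x = 0 /\ y = 0.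
Proof.
  intros E1 E2. split.
  - apply (Rmult_eq_reg_r (u1*v2 - u2*v1)); [|exact Hdet].
    transitivity (v2*(x*u1 + y*v1) - v1*(x*u2 + y*v2)); [ring|rewrite E1, E2; ring].
  - apply (Rmult_eq_reg_r (u1*v2 - u2*v1)); [|exact Hdet].
    transitivity (u1*(x*u2 + y*v2) - u2*(x*u1 + y*v1)); [ring|rewrite E1, E2; ring].
Qed.

Lemma lin2_injective : Injective (lin2 u1 u2 v1 v2).
Proof.
  intros [x y z] [x' y' z'] E. injection E as E1 E2 E3.
  destruct (lin2_kernel (x-x') (y-y')) as [Hx Hy]; [lra|lra|].
  f_equal; lra.
Qed.

Lemma lin2_pmid P Q :
  lin2 u1 u2 v1 v2 (pmid P Q) = pmid (lin2 u1 u2 v1 v2 P) (lin2 u1 u2 v1 v2 Q).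
Proof. unfold lin2, pmid; simpl. f_equal; field. Qed.

End Lin2.

Lemma Mset_of_norm3 M : seminorm3 M -> definite3 M ->
  exists l, length l = 4%nat /\ Mset_list pmid (uncurry3 M) l.
Proof.
  intros HM Hdef.
  destruct (unit_half_diagonals_of_norm3 M HM Hdef)
    as (u1 & u2 & v1 & v2 & Hu & Hv & Hb & Hc & Hdet).
  set (K := fun x y z => M (x*u1 + y*v1) (x*u2 + y*v2) z).
  destruct (Mset_of_unit_half_diagonals K) as (l & Hlen & Hl).
  - split; intros; unfold K.
    + rewrite <- seminorm3_scale by exact HM. f_equal; ring.
    + replace (M ((x+x')*u1 + (y+y')*v1) ((x+x')*u2 + (y+y')*v2) (z+z'))
        with (M ((x*u1 + y*v1) + (x'*u1 + y'*v1)) ((x*u2 + y*v2) + (x'*u2 + y'*v2)) (z+z'))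
        by (f_equal; ring).
      apply seminorm3_add, HM.
  - intros x y z E. apply Hdef in E as (E1 & E2 & E3).
    destruct (lin2_kernel u1 u2 v1 v2 Hdet x y E1 E2). auto.
  - replace (K 1 0 0) with (M u1 u2 0) by (unfold K; f_equal; ring). exact Hu.
  - replace (K 0 1 0) with (M v1 v2 0) by (unfold K; f_equal; ring). exact Hv.
  - unfold K. transitivity (M ((u1+v1)/2) ((u2+v2)/2) 0); [f_equal; field|exact Hb].
  - unfold K. transitivity (M ((u1-v1)/2) ((u2-v2)/2) 0); [f_equal; field|exact Hc].
  - exists (map (lin2 u1 u2 v1 v2) l). split; [rewrite length_map; exact Hlen|].
    apply (Mset_list_map pmid pmid);
      [apply lin2_injective, Hdet|apply lin2_pmid|exact Hl].
Qed.

Definition embed3 {n : nat} (P : pt) : Vec n := fun j =>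
  match proj1_sig (Fin.to_nat j) with
  | 0%nat => px P | 1%nat => py P | 2%nat => pz P | _ => 0
  end.

Ltac embed3_ext :=
  let j := fresh "j" in
  apply functional_extensionality; intro j;
  unfold midpoint, vscale, vadd, vzero, embed3, pmid; simpl;
  destruct (proj1_sig (Fin.to_nat j)) as [|[|[|]]]; simpl; field.

Lemma embed3_scale {n : nat} k x y z :
  @embed3 n (Pt (k*x) (k*y) (k*z)) = vscale k (embed3 (Pt x y z)).
Proof. embed3_ext. Qed.

Lemma embed3_add {n : nat} x y z x' y' z' :
  @embed3 n (Pt (x+x') (y+y') (z+z')) = vadd (embed3 (Pt x y z)) (embed3 (Pt x' y' z')).
Proof. embed3_ext. Qed.

Lemma embed3_pmid {n : nat} P Q :
  @embed3 n (pmid P Q) = midpoint (embed3 P) (embed3 Q).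
Proof. embed3_ext. Qed.

Lemma embed3_zero {n : nat} : @embed3 n (Pt 0 0 0) = vzero.
Proof. embed3_ext. Qed.

Lemma embed3_injective {n : nat} : (3 <= n)%nat -> Injective (@embed3 n).
Proof.
  intros Hn [x y z] [x' y' z'] E.
  assert (H0 : (0 < n)%nat) by lia. assert (H1 : (1 < n)%nat) by lia.
  assert (H2 : (2 < n)%nat) by lia.
  pose proof (f_equal (fun v => v (Fin.of_nat_lt H0)) E) as E0.
  pose proof (f_equal (fun v => v (Fin.of_nat_lt H1)) E) as E1.
  pose proof (f_equal (fun v => v (Fin.of_nat_lt H2)) E) as E2.
  cbv beta in E0, E1, E2. unfold embed3 in E0, E1, E2.
  rewrite Fin.to_nat_of_nat in E0. rewrite Fin.to_nat_of_nat in E1.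
  rewrite Fin.to_nat_of_nat in E2.
  simpl in E0, E1, E2. subst. reflexivity.
Qed.

Lemma seminorm3_embed3 {n : nat} (N : Vec n -> R) :
  is_norm N -> seminorm3 (fun x y z => N (embed3 (Pt x y z))).
Proof.
  intros (_ & Hscale & Hadd). split; intros.
  - rewrite embed3_scale. apply Hscale.
  - rewrite embed3_add. apply Hadd.
Qed.

Lemma definite3_embed3 {n : nat} (N : Vec n -> R) :
  (3 <= n)%nat -> is_norm N -> definite3 (fun x y z => N (embed3 (Pt x y z))).
Proof.
  intros Hn (Hdef & _) x y z E.
  apply Hdef in E. rewrite <- embed3_zero in E.
  apply embed3_injective in E; [|exact Hn]. injection E. auto.
Qed.

Theorem lemma4 (n : nat) (N : Vec n -> R) :
  (3 <= n)%nat -> is_norm N -> m_ge N 4.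
Proof.
  intros Hn HN.
  destruct (Mset_of_norm3 (fun x y z => N (embed3 (Pt x y z))))
    as (l & Hlen & Hl);
    [apply seminorm3_embed3, HN|apply definite3_embed3; assumption|].
  apply (m_ge_of_Mset_list N (map embed3 l)); [rewrite length_map; exact Hlen|].
  apply (Mset_list_map pmid midpoint);
    [apply embed3_injective, Hn|apply embed3_pmid|exact Hl].
Qed.
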